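(* Let $\Sigma$ be a Markov shift with countable alphabet $I$, let $G$ be a countable group and $\Psi:I^*\to G$ a semigroup homomorphism, and let $\varphi:\Sigma\to\mathbb{R}$ be of medium variation and asymptotically $\alpha$-symmetric with respect to $\Psi$ for some $\alpha\ge1$. Then there exist Hölder continuous functions $\varphi_j:\Sigma\to\mathbb{R}$ and real numbers $D_j\ge1$, $j\in\mathbb{N}$, such that each $\varphi_j$ is asymptotically $\alpha D_j^{1/(2j)}$-symmetric with respect to $\Psi$, $\lim_j D_j^{1/(2j)}=1$, and $\varphi_j\to\varphi$ uniformly on compact subsets of $\Sigma$.
   Context: Markov shift: for a countable alphabet $I\subset\mathbb{N}$ and $A\in\{0,1\}^{I\times I}$, $\Sigma=\{\omega\in I^{\mathbb{N}}: a(\omega_i,\omega_{i+1})=1\ \forall i\}$ with product-of-discrete topology and left shift $\sigma$; $\Sigma^n$ admissible words of length $n$, $\Sigma^*=\bigcup_n\Sigma^n$, $|\omega|$ word length, $[\omega]$ cylinder. $\Psi(\omega)=\Psi(\omega_1)\cdots\Psi(\omega_n)$ for words. $S_n\varphi=\sum_{i<n}\varphi\circ\sigma^i$. Hölder continuous: for some $\beta>0$, $\sup\{|\varphi(\omega)-\varphi(\tau)|e^{\beta|\omega\wedge\tau|}:|\omega\wedge\tau|\ge1\}<\infty$, $|\omega\wedge\tau|$ the length of the longest common initial block. Medium variation: $\varphi$ is continuous and there is $(D_n)$ with $D_n^{1/n}\to1$ such that $e^{S_n\varphi(x)-S_n\varphi(y)}\le D_n$ for all $n$, $\omega\in\Sigma^n$,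 $x,y\in[\omega]$. Asymptotically $\alpha$-symmetric w.r.t. $\Psi$ ($\alpha\ge1$): there exist $n_0$, $(c_n)\subset\mathbb{R}^+$ with $c_n^{1/(2n)}\to\alpha$, $(N_n)\subset\mathbb{N}$ with $N_n/n\to0$, such that for all $g\in G$, $n\ge n_0$: $\sum_{\omega\in\Sigma^n:\Psi(\omega)=g}e^{\sup S_n\varphi|_{[\omega]}}\le c_n\sum_{\omega\in\Sigma^*:\Psi(\omega)=g^{-1},\ n-N_n\le|\omega|\le n+N_n}e^{\sup S_{|\omega|}\varphi|_{[\omega]}}$. *)

From HB Require Import structures.
From mathcomp Require Import all_boot all_order all_algebra.
From mathcomp Require Import all_classical all_reals all_analysis.
Set Implicit Arguments. Unset Strict Implicit. Unset Printing Implicit Defensive.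
Import Order.TTheory GRing.Theory Num.Theory.
Import numFieldNormedType.Exports.
Local Open Scope classical_set_scope.
Local Open Scope ring_scope.

(* Points of the full shift space: sequences nat -> nat (0-indexed, so
   x 0 is the first letter omega_1), with the product of discrete topologies
   (pointwise convergence topology, nat being discrete). *)
Notation Seq := {ptws nat -> nat}.

Definition Sigma (I : set nat) (A : nat -> nat -> bool) : set Seq :=
  [set x : Seq | forall i : nat, I (x i) /\ A (x i) (x i.+1)].

Definition shift (x : Seq) : Seq := fun i => x i.+1.

Definition Birk {R : realType} (phi : Seq -> R) (n : nat) (x : Seq) : R :=
  \sum_(i < n) phi (iter i shift x).

Definition admissible (I : set nat) (A : nat -> nat -> bool) (w : seq nat) : Prop :=
  (forall i, (i < size w)%N -> I (nth 0%N w i)) /\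
  (forall i, (i.+1 < size w)%N -> A (nth 0%N w i) (nth 0%N w i.+1)).

Definition cylinder (I : set nat) (A : nat -> nat -> bool) (w : seq nat) : set Seq :=
  [set x | Sigma I A x /\ forall i, (i < size w)%N -> x i = nth 0%N w i].

Definition supS {R : realType} (I : set nat) (A : nat -> nat -> bool)
  (phi : Seq -> R) (n : nat) (w : seq nat) : \bar R :=
  ereal_sup [set (Birk phi n x)%:E | x in cylinder I A w].

Definition is_group (G : Type) (mul : G -> G -> G) (one : G) (inv : G -> G) : Prop :=
  [/\ forall a b c, mul a (mul b c) = mul (mul a b) c,
      forall a, mul one a = a,
      forall a, mul a one = a,
      forall a, mul (inv a) a = one
    & forall a, mul a (inv a) = one].

(* The semigroup homomorphism Psi : I^* -> G determined by its values on
   letters: Psi(w_1...w_n) = Psi(w_1) ... Psi(w_n). *)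
Definition Psi_word (G : Type) (mul : G -> G -> G) (one : G) (psi : nat -> G)
  (w : seq nat) : G := foldr (fun a g => mul (psi a) g) one w.

Definition holder {R : realType} (I : set nat) (A : nat -> nat -> bool)
  (phi : Seq -> R) : Prop :=
  exists beta : R, 0 < beta /\ exists M : R,
    forall (n : nat) (x y : Seq), (1 <= n)%N -> Sigma I A x -> Sigma I A y ->
      (forall i, (i < n)%N -> x i = y i) ->
      `|phi x - phi y| * expR (beta * n%:R) <= M.

Definition medium_variation {R : realType} (I : set nat) (A : nat -> nat -> bool)
  (phi : Seq -> R) : Prop :=
  {within Sigma I A, continuous phi} /\
  exists D : nat -> R,
    (fun n : nat => D n `^ (n%:R^-1)) @ \oo --> (1 : R) /\
    forall (n : nat) (w : seq nat) (x y : Seq),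
      admissible I A w -> size w = n -> cylinder I A w x -> cylinder I A w y ->
      expR (Birk phi n x - Birk phi n y) <= D n.

Definition asym_symmetric {R : realType} (I : set nat) (A : nat -> nat -> bool)
  (G : Type) (mul : G -> G -> G) (one : G) (inv : G -> G) (psi : nat -> G)
  (phi : Seq -> R) (alpha : R) : Prop :=
  exists n0 : nat, exists c : nat -> R,
    (forall n, 0 < c n) /\
    (fun n : nat => c n `^ ((2 * n)%:R^-1)) @ \oo --> alpha /\
    exists N : nat -> nat,
      (fun n : nat => (N n)%:R / n%:R : R) @ \oo --> (0 : R) /\
      forall (g : G) (n : nat), (n0 <= n)%N ->
        (\esum_(w in [set w : seq nat | admissible I A w /\ size w = n /\
                                       Psi_word mul one psi w = g])
            expeR (supS I A phi n w)
         <= (c n)%:E *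
            \esum_(w in [set w : seq nat | admissible I A w /\ (1 <= size w)%N /\
                           Psi_word mul one psi w = inv g /\
                           (n - N n <= size w)%N /\ (size w <= n + N n)%N])
               expeR (supS I A phi (size w) w))%E.

From Pilot Require Import Defs.
From mathcomp Require Import all_boot all_order all_algebra.
From mathcomp Require Import all_classical all_reals all_analysis.
From mathcomp Require Import zify ring lra.
Import Order.TTheory GRing.Theory Num.Theory.
Import numFieldNormedType.Exports.
Local Open Scope classical_set_scope.
Local Open Scope ring_scope.
Set Implicit Arguments. Unset Strict Implicit. Unset Printing Implicit Defensive.

(* The approximants are averages over prolongations: [prolong k z] keeps the
   first [k] letters of [z] and continues admissibly from the last of them, and
   [phi_avg N z] averages [phi (prolong (N - t) z)] over [t < N].  Such an average
   depends only on the first [N] letters, hence is Hoelder.  Medium variation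
   bounds [phi z - phi (prolong k z)] by [log D_1]; summing these defects along an
   orbit and regrouping the double sum along diagonals, whose sums compare [S_N phi]
   at two points of one [N]-cylinder, gives
   [|S_n phi - S_n (phi_avg N)| <= n log D_N / N + 2 N log D_1].  Perturbing all
   Birkhoff sums by at most [n a + b] keeps asymptotic symmetry up to a factor
   [expR a] on [alpha], and here [a = log D_N / N] tends to [0].  Uniform
   convergence on compacta comes from continuity of [phi]: near [x], all but [k] of
   the averaged prolongations stay in the cylinder of length [k] around [x]. *)

Lemma iter_shiftE (x : Seq) (i j : nat) : iter i Defs.shift x j = x (i + j)%N.
Proof. by elim: i j => [|i IH] j //=; rewrite /Defs.shift IH addSnnS. Qed.

Section Prolongation.
Variables (I : set nat) (A : nat -> nat -> bool).

Lemma Sigma_iter_shift (x : Seq) i : Sigma I A x -> Sigma I A (iter i Defs.shift x).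
Proof. by move=> Sx j; rewrite !iter_shiftE addnS; exact: Sx. Qed.

Definition Sigma_from (a : nat) : Seq :=
  xget (fun _ => 0%N) [set x : Seq | Sigma I A x /\ x 0%N = a].

Lemma Sigma_fromP (x : Seq) : Sigma I A x ->
  Sigma I A (Sigma_from (x 0%N)) /\ Sigma_from (x 0%N) 0%N = x 0%N.
Proof.
by move=> Sx; apply: (@xgetPex _ _ [set y : Seq | Sigma I A y /\ y 0%N = x 0%N]); exists x.
Qed.

Definition prolong (k : nat) (z : Seq) : Seq :=
  fun i => if (i < k)%N then z i else Sigma_from (z k.-1) (i - k.-1)%N.

Lemma prolongE k (z : Seq) i : (i < k)%N -> prolong k z i = z i.
Proof. by rewrite /prolong => ->. Qed.

Lemma Sigma_prolong k (z : Seq) : (0 < k)%N -> Sigma I A z -> Sigma I A (prolong k z).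
Proof.
move=> k0 Sz.
have [St St0] := Sigma_fromP (Sigma_iter_shift k.-1 Sz).
rewrite iter_shiftE addn0 in St St0.
move=> i; rewrite /prolong; case: (ltngtP i.+1 k) => hi.
- exact: Sz.
- by rewrite subSn; [exact: St | lia].
- move: St St0; rewrite -hi /= subSnn => St St0.
  by split; [case: (Sz i) | rewrite -{1}St0; case: (St 0%N)].
Qed.

Lemma shift_prolong k (z : Seq) : (0 < k)%N ->
  Defs.shift (prolong k.+1 z) = prolong k (Defs.shift z).
Proof.
move=> k0; apply: funext => i; rewrite /Defs.shift /prolong /= ltnS prednK //.
by case: ifP => // _; congr (Sigma_from _ _); lia.
Qed.

Lemma iter_shift_prolong N t (z : Seq) : (t < N)%N ->
  iter t Defs.shift (prolong N z) = prolong (N - t) (iter t Defs.shift z).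
Proof.
elim: t => [|t IH] ht /=; first by rewrite subn0.
rewrite IH ?(ltnW ht) //.
have -> : (N - t = (N - t.+1).+1)%N by lia.
by rewrite shift_prolong //; lia.
Qed.

Lemma eq_prolong k (x y : Seq) : (0 < k)%N ->
  (forall i, (i < k)%N -> x i = y i) -> prolong k x = prolong k y.
Proof.
move=> k0 h; apply: funext => i; rewrite /prolong.
by case: ifP => hi; [exact: h | rewrite h //; lia].
Qed.

End Prolongation.

Definition medium_variation_bound {R : realType} (I : set nat) (A : nat -> nat -> bool)
  (phi : Seq -> R) (D : nat -> R) :=
  forall (n : nat) (w : seq nat) (x y : Seq),
    admissible I A w -> size w = n -> cylinder I A w x -> cylinder I A w y ->
    expR (Birk phi n x - Birk phi n y) <= D n.

Definition var_bound {R : realType} (D : nat -> R) (n : nat) : R :=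
  Num.max 0 (ln (D n)).

Lemma var_bound_ge0 {R : realType} (D : nat -> R) n : 0 <= var_bound D n.
Proof. by rewrite le_max lexx. Qed.

Lemma Birk1 {R : realType} (phi : Seq -> R) x : Birk phi 1 x = phi x.
Proof. by rewrite /Birk big_ord1. Qed.

Lemma norm_sum_le {R : realDomainType} (F : nat -> R) (n : nat) (V : R) :
  (forall i, (i < n)%N -> `|F i| <= V) -> `|\sum_(i < n) F i| <= n%:R * V.
Proof.
move=> hF; apply: le_trans (ler_norm_sum _ _ _) _.
rewrite mulr_natl -[in X in _ <= X](card_ord n) -sumr_const.
by apply: ler_sum => i _; exact: hF.
Qed.

Section AveragedPotential.
Variables (R : realType) (I : set nat) (A : nat -> nat -> bool).
Variables (phi : Seq -> R) (D : nat -> R).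
Hypothesis phiD : medium_variation_bound I A phi D.

Lemma Birk_var n (x y : Seq) : Sigma I A x -> Sigma I A y ->
  (forall i, (i < n)%N -> x i = y i) ->
  `|Birk phi n x - Birk phi n y| <= var_bound D n.
Proof.
move=> Sx Sy hxy; pose w := mkseq x n.
have sw : size w = n by rewrite size_mkseq.
have adm : admissible I A w.
  split=> i hi; rewrite size_mkseq in hi; rewrite !nth_mkseq //; try lia.
    by case: (Sx i).
  by case: (Sx i).
have cx : cylinder I A w x by split=> // i; rewrite sw => hi; rewrite nth_mkseq.
have cy : cylinder I A w y by split=> // i; rewrite sw => hi; rewrite nth_mkseq // hxy.
have le_var e : expR e <= D n -> e <= var_bound D n.
  move=> he; have D0 : 0 < D n by apply: lt_le_trans he; exact: expR_gt0.
  by rewrite le_max -(expRK e) ler_ln ?posrE ?expR_gt0 ?he ?orbT.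
by rewrite ler_norml lerNl opprB !le_var // (phiD adm sw).
Qed.

Lemma phi_var (x y : Seq) : Sigma I A x -> Sigma I A y -> x 0%N = y 0%N ->
  `|phi x - phi y| <= var_bound D 1.
Proof.
move=> Sx Sy xy0; rewrite -(Birk1 phi x) -(Birk1 phi y); apply: Birk_var => // i.
by rewrite ltnS leqn0 => /eqP ->.
Qed.

Lemma phi_prolong_var k (z : Seq) : (0 < k)%N -> Sigma I A z ->
  `|phi z - phi (prolong I A k z)| <= var_bound D 1.
Proof.
by move=> k0 Sz; apply: phi_var => //; [exact: Sigma_prolong | rewrite prolongE].
Qed.

Definition phi_avg (N : nat) (z : Seq) : R :=
  N%:R^-1 * \sum_(t < N) phi (prolong I A (N - t) z).

Lemma phi_sub_avg N (z : Seq) : (0 < N)%N ->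
  phi z - phi_avg N z = N%:R^-1 * \sum_(t < N) (phi z - phi (prolong I A (N - t) z)).
Proof.
move=> N0; rewrite /phi_avg sumrB sumr_const card_ord mulrBr; congr (_ - _).
by rewrite -[phi z *+ N]mulr_natl mulKf // pnatr_eq0 -lt0n.
Qed.

Lemma phi_avg_prefix N (x y : Seq) : (forall i, (i < N)%N -> x i = y i) ->
  phi_avg N x = phi_avg N y.
Proof.
move=> hxy; congr (_ * _); apply: eq_bigr => t _; have tN := ltn_ord t.
by congr phi; apply: eq_prolong => [|i hi]; [lia | apply: hxy; lia].
Qed.

Lemma phi_avg_var N (x y : Seq) : (0 < N)%N -> Sigma I A x -> Sigma I A y ->
  x 0%N = y 0%N -> `|phi_avg N x - phi_avg N y| <= var_bound D 1.
Proof.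
move=> N0 Sx Sy xy0.
have N0R : 0 < N%:R :> R by rewrite ltr0n.
rewrite /phi_avg -mulrBr -sumrB normrM normfV normr_nat.
rewrite ler_pdivrMl //.
apply: (norm_sum_le (F := fun t => phi (prolong I A (N - t) x) - phi (prolong I A (N - t) y))).
move=> t ht; have tN : (0 < N - t)%N by lia.
by apply: phi_var; [exact: Sigma_prolong | exact: Sigma_prolong | rewrite !prolongE].
Qed.

Lemma holder_phi_avg N : (0 < N)%N -> holder I A (phi_avg N).
Proof.
move=> N0; exists 1; split=> //; exists (var_bound D 1 * expR N%:R).
move=> n x y n1 Sx Sy hxy; case: (leqP n N) => hn.
  apply: ler_pM; rewrite ?normr_ge0 ?expR_ge0 //.
    by apply: phi_avg_var => //; apply: hxy.
  by rewrite mul1r ler_expR ler_nat.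
rewrite (@phi_avg_prefix N x y) => [|i hi]; last by apply: hxy; lia.
by rewrite subrr normr0 mul0r mulr_ge0 ?var_bound_ge0 ?expR_ge0.
Qed.

End AveragedPotential.

Lemma sum_shift_sub {R : zmodType} (g : nat -> R) (n t : nat) :
  \sum_(k < n) g (k + t)%N - \sum_(k < n) g k =
  \sum_(k < t) g (k + n)%N - \sum_(k < t) g k.
Proof.
have split_sum a b : \sum_(k < a + b) g k = \sum_(k < a) g k + \sum_(k < b) g (k + a)%N.
  rewrite -!(big_mkord xpredT) (big_cat_nat _ (leq_addr b a)) //=.
  by rewrite (big_addn 0 (a + b) a) addKn; congr (_ + _); rewrite big_mkord.
have e : \sum_(k < n) g k + \sum_(k < t) g (k + n)%N =
         \sum_(k < t) g k + \sum_(k < n) g (k + t)%N by rewrite -!split_sum addnC.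
by apply/eqP; rewrite subr_eq addrAC eq_sym subr_eq addrC e addrC.
Qed.

Lemma sum_shift_sub_le {R : realDomainType} (g : nat -> R) (n t N : nat) (V : R) :
  (t <= N)%N -> (forall k, `|g k| <= V) ->
  `|\sum_(k < n) g (k + t)%N - \sum_(k < n) g k| <= 2 * N%:R * V.
Proof.
move=> tN gV; have V0 : 0 <= V := le_trans (normr_ge0 _) (gV 0%N).
rewrite sum_shift_sub; apply: le_trans (ler_normB _ _) _.
have tV : t%:R * V <= N%:R * V by rewrite ler_wpM2r // ler_nat.
have := norm_sum_le (F := fun k => g (k + n)%N) (n := t) (fun k _ => gV _).
have := norm_sum_le (F := g) (n := t) (fun k _ => gV _).
lra.
Qed.

Lemma sum_diagonal_le {R : realDomainType} (f : nat -> nat -> R) (N n : nat) (a V : R) :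
  (forall k, `|\sum_(t < N) f t (t + k)%N| <= a) ->
  (forall t i, (t < N)%N -> `|f t i| <= V) ->
  `|\sum_(i < n) \sum_(t < N) f t i| <= n%:R * a + N%:R * (2 * N%:R * V).
Proof.
move=> diag_a fV.
have -> : \sum_(i < n) \sum_(t < N) f t i =
    \sum_(k < n) \sum_(t < N) f t (t + k)%N -
    \sum_(t < N) (\sum_(k < n) f t (k + t)%N - \sum_(k < n) f t k).
  have -> : \sum_(k < n) \sum_(t < N) f t (t + k)%N =
            \sum_(t < N) \sum_(k < n) f t (k + t)%N.
    by rewrite exchange_big; apply: eq_bigr => t _; apply: eq_bigr => k _; rewrite addnC.
  by rewrite exchange_big sumrB opprB addrCA subrr addr0.
apply: le_trans (ler_normB _ _) _; apply: lerD.
  by apply: (norm_sum_le (F := fun k => \sum_(t < N) f t (t + k)%N)) => k _.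
apply: (norm_sum_le (F := fun t => \sum_(k < n) f t (k + t)%N - \sum_(k < n) f t k)).
move=> t tN; apply: sum_shift_sub_le (ltnW tN) _ => k.
exact: fV.
Qed.

Section BirkhoffEstimate.
Variables (R : realType) (I : set nat) (A : nat -> nat -> bool).
Variables (phi : Seq -> R) (D : nat -> R).
Hypothesis phiD : medium_variation_bound I A phi D.

Lemma Birk_sub_avg_le (N n : nat) (x : Seq) : (0 < N)%N -> Sigma I A x ->
  `|Birk phi n x - Birk (phi_avg I A phi N) n x| <=
    n%:R * (var_bound D N / N%:R) + 2 * N%:R * var_bound D 1.
Proof.
move=> N0 Sx; have N0R : 0 < N%:R :> R by rewrite ltr0n.
pose f t i := phi (iter i Defs.shift x) - phi (prolong I A (N - t) (iter i Defs.shift x)).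
have -> : Birk phi n x - Birk (phi_avg I A phi N) n x =
    N%:R^-1 * \sum_(i < n) \sum_(t < N) f t i.
  rewrite /Birk -sumrB mulr_sumr; apply: eq_bigr => i _; exact: phi_sub_avg.
rewrite normrM normfV normr_nat ler_pdivrMl //.
apply: le_trans (@sum_diagonal_le _ f N n (var_bound D N) (var_bound D 1) _ _) _.
- move=> k; have -> : \sum_(t < N) f t (t + k)%N =
      Birk phi N (iter k Defs.shift x) -
      Birk phi N (prolong I A N (iter k Defs.shift x)).
    rewrite /Birk -sumrB; apply: eq_bigr => t _.
    by rewrite /f iterD iter_shift_prolong.
  have Sk := Sigma_iter_shift k Sx.
  apply: (Birk_var phiD); [exact: Sk | exact: Sigma_prolong |].
  by move=> i iN; rewrite prolongE.
- move=> t i tN; apply: (phi_prolong_var phiD); [lia | exact: Sigma_iter_shift].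
- by rewrite le_eqVlt; apply/orP; left; apply/eqP; field; rewrite lt0r_neq0.
Qed.

End BirkhoffEstimate.

Lemma esum_scale_le {R : realType} (T : choiceType) (S : set T) (k : R) (a : T -> \bar R) :
  0 <= k -> (forall x, (0 <= a x)%E) ->
  (\esum_(x in S) (k%:E * a x) <= k%:E * \esum_(x in S) a x)%E.
Proof.
move=> k0 a0; apply: ge_ereal_sup => _ [X XS <-].
rewrite -ge0_mule_fsumr //; apply: lee_wpmul2l; first by rewrite lee_fin.
by apply: ereal_sup_ubound; exists X.
Qed.

Lemma inv_nat_cvg0 {R : realType} : (fun n : nat => (n%:R : R)^-1) @ \oo --> (0 : R).
Proof.
rewrite -cvg_shiftS; apply: cvg_trans cvg_harmonic.
by apply: near_eq_cvg; near=> n.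
Unshelve. all: by end_near. Qed.

Lemma cvg_affine_mean {R : realType} (a b : R) (N : nat -> nat) :
  (fun n : nat => (N n)%:R / n%:R : R) @ \oo --> (0 : R) ->
  (fun n : nat => ((n%:R * a + b) + ((n + N n)%N%:R * a + b)) / (2 * n)%:R) @ \oo --> a.
Proof.
move=> N_o.
have : (fun n : nat => a + (N n)%:R / n%:R * (a / 2) + b * (n%:R)^-1) @ \oo --> a.
  rewrite -[X in _ --> X]addr0 -[X in _ --> X]addr0.
  apply: cvgD; [apply: cvgD; [exact: cvg_cst|] |].
    by rewrite -(mul0r (a / 2)); exact: cvgMr_tmp.
  by rewrite -(mulr0 b); apply: cvgMl_tmp; exact: inv_nat_cvg0.
apply: cvg_trans; apply: near_eq_cvg; near=> n => /=.
have n0 : (n%:R : R) != 0 by rewrite pnatr_eq0 -lt0n; near: n; exists 1%N.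
by rewrite natrM natrD; field; rewrite n0.
Unshelve. all: by end_near. Qed.

Section SymmetryTransfer.
Variables (R : realType) (I : set nat) (A : nat -> nat -> bool).

Lemma expeR_supS_le (f g : Seq -> R) n w (d : R) :
  (forall x, Sigma I A x -> Birk f n x <= Birk g n x + d) ->
  (expeR (supS I A f n w) <= (expR d)%:E * expeR (supS I A g n w))%E.
Proof.
move=> fg; have : (supS I A f n w <= supS I A g n w + d%:E)%E.
  apply: ge_ereal_sup => _ [x cx <-].
  apply: (@le_trans _ _ ((Birk g n x)%:E + d%:E)%E).
    by rewrite -EFinD lee_fin; apply: fg; case: cx.
  by apply: leeD2r; apply: ereal_sup_ubound; exists x.
by rewrite -lee_expeR expeRD muleC.
Qed.

Lemma esum_supS_le (S : set (seq nat)) (m : seq nat -> nat) (f g : Seq -> R) (d : R) :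
  (forall w x, S w -> Sigma I A x -> Birk f (m w) x <= Birk g (m w) x + d) ->
  (\esum_(w in S) expeR (supS I A f (m w) w) <=
     (expR d)%:E * \esum_(w in S) expeR (supS I A g (m w) w))%E.
Proof.
move=> fg; apply: le_trans (esum_scale_le _ _ _); last 2 first.
- exact: expR_ge0.
- by move=> w; exact: expeR_ge0.
by apply: le_esum => w Sw; apply: expeR_supS_le => x; exact: fg.
Qed.

Lemma asym_symmetric_perturb (G : Type) (mul : G -> G -> G) (one : G) (inv : G -> G)
    (psi : nat -> G) (phi1 phi2 : Seq -> R) (alpha a b : R) :
  0 <= a -> 0 <= b ->
  (forall m x, Sigma I A x -> `|Birk phi1 m x - Birk phi2 m x| <= m%:R * a + b) ->
  asym_symmetric I A mul one inv psi phi1 alpha ->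
  asym_symmetric I A mul one inv psi phi2 (alpha * expR a).
Proof.
move=> a0 b0 phi12 [n0 [c [c_gt0 [c_cvg [N [N_o sym1]]]]]].
pose d (m : nat) := m%:R * a + b.
have [le21 le12] : (forall m x, Sigma I A x -> Birk phi2 m x <= Birk phi1 m x + d m) /\
                   (forall m x, Sigma I A x -> Birk phi1 m x <= Birk phi2 m x + d m).
  by split=> m x Sx; have := phi12 m x Sx; rewrite ler_norml /d => /andP[]; lra.
exists n0, (fun n => c n * expR (d n + d (n + N n)%N)); split.
  by move=> n; rewrite mulr_gt0 ?expR_gt0.
split.
  have -> : (fun n : nat => (c n * expR (d n + d (n + N n)%N)) `^ ((2 * n)%:R^-1)) =
      (fun n : nat => c n `^ ((2 * n)%:R^-1) *
        expR ((d n + d (n + N n)%N) / (2 * n)%:R)).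
    by apply: funext => n; rewrite powRM ?expR_ge0 ?(ltW (c_gt0 n)) // -expRM.
  apply: cvgM c_cvg _; apply: continuous_cvg; first exact: continuous_expR.
  exact: cvg_affine_mean.
exists N; split=> // g n n0n.
have sym2 := esum_supS_le (S := [set w : seq nat | admissible I A w /\ (1 <= size w)%N /\
    Psi_word mul one psi w = inv g /\ (n - N n <= size w)%N /\ (size w <= n + N n)%N])
  (m := size) (f := phi1) (g := phi2) (d := d (n + N n)%N).
apply: le_trans (esum_supS_le (m := fun=> n) (d := d n) _) _.
  by move=> w x _; exact: le21.
apply: le_trans (lee_wpmul2l _ (le_trans (sym1 g n n0n) (lee_wpmul2l _ (sym2 _)))) _.
- by rewrite lee_fin expR_ge0.
- by rewrite lee_fin ltW.
- move=> w x [_ [_ [_ [_ hw]]]] Sx; apply: le_trans (le12 _ _ Sx) _.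
  by rewrite lerD2l /d lerD2r ler_wpM2r // ler_nat.
by rewrite (expRD (d n)) !EFinM muleCA !muleA; exact: lexx.
Qed.

End SymmetryTransfer.

Lemma powR_expR_var_bound {R : realType} (D : nat -> R) (N : nat) : (0 < N)%N ->
  expR (2 * var_bound D N) `^ ((2 * N)%:R^-1) = expR (var_bound D N / N%:R).
Proof.
by move=> N0; rewrite -expRM natrM; congr expR; field; rewrite pnatr_eq0 -lt0n.
Qed.

Lemma var_bound_cvg {R : realType} (D : nat -> R) :
  (fun n : nat => D n `^ (n%:R^-1)) @ \oo --> (1 : R) ->
  (fun n : nat => expR (var_bound D n / n%:R)) @ \oo --> (1 : R).
Proof.
move=> D_cvg.
have ln_cvg : (fun n : nat => ln (D n) / n%:R) @ \oo --> (0 : R).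
  have -> : (fun n : nat => ln (D n) / n%:R) = (@ln R) \o (fun n : nat => D n `^ n%:R^-1).
    by apply: funext => n /=; rewrite ln_powR mulrC.
  by rewrite -ln1; apply: continuous_cvg D_cvg; exact: continuous_ln.
have -> : (fun n : nat => expR (var_bound D n / n%:R)) =
    (@expR R) \o (fun n : nat => (ln (D n) / n%:R + `|ln (D n) / n%:R|) / 2).
  apply: funext => n /=; rewrite /var_bound maxr_pMl ?invr_ge0 // mul0r maxr_absE.
  by rewrite sub0r normrN add0r.
have pos_cvg : (fun n : nat => (ln (D n) / n%:R + `|ln (D n) / n%:R|) / 2) @ \oo --> (0 : R).
  suff : (fun n : nat => (ln (D n) / n%:R + `|ln (D n) / n%:R|) / 2) @ \oo -->
         ((0 : R) + `|0 : R|) / 2 by rewrite normr0 addr0 mul0r.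
  by apply: cvgMr_tmp; apply: cvgD ln_cvg (cvg_norm ln_cvg).
have := @continuous_cvg _ _ _ _ _ _ (@expR R) 0 (@continuous_expR R 0) pos_cvg.
by rewrite expR0; apply; exact: eventually_filter.
Qed.

Definition same_prefix (x : Seq) (k : nat) : set Seq :=
  [set y : Seq | forall i, (i < k)%N -> y i = x i].

Lemma same_prefix_nbhs (x : Seq) k : nbhs x (same_prefix x k).
Proof.
elim: k => [|k IH]; first by apply: filterS (@filterT _ (nbhs x) _) => y _ i.
have -> : same_prefix x k.+1 = same_prefix x k `&` [set y : Seq | y k = x k].
  apply/seteqP; split=> y.
    by move=> h; split=> [i ik|]; apply: h => //; lia.
  by move=> [h yk] i; rewrite ltnS leq_eqVlt => /orP[/eqP -> //|]; exact: h.
apply: filterI => //.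
have xk : nbhs (proj k x) [set x k] by apply/principal_filterP.
exact: (@proj_continuous nat (fun _ : nat => nat) k x _ xk).
Qed.

Lemma nbhs_same_prefix (x : Seq) (U : set Seq) : nbhs x U ->
  exists k, same_prefix x k `<=` U.
Proof.
move=> xU; apply: contrapT => noU.
have yP k : exists y : Seq, same_prefix x k y /\ ~ U y.
  apply: contrapT => ny; apply: noU; exists k => y xy.
  by apply: contrapT => Uy; apply: ny; exists y.
pose y k : Seq := projT1 (cid (yP k)).
have y_cvg : y @ \oo --> x.
  apply/pointwise_cvgP => t; apply: cvg_near_cst; exists t.+1 => // k /= tk.
  by case: (projT2 (cid (yP k))) => + _; apply.
have [k0 _ Uy] := y_cvg U xU.
have := Uy k0 (leqnn k0).
by have [_ nU] := projT2 (cid (yP k0)).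
Qed.

Lemma continuous_same_prefix {R : realType} (I : set nat) (A : nat -> nat -> bool)
    (phi : Seq -> R) (x : Seq) (e : R) :
  {within Sigma I A, continuous phi} -> Sigma I A x -> 0 < e ->
  exists k, forall y, same_prefix x k y -> Sigma I A y -> `|phi x - phi y| < e.
Proof.
move=> phi_cont Sx e0.
have := (subspace_continuousP _ _).1 phi_cont x Sx _ (nbhsx_ballx (phi x) e e0).
move=> /nbhs_same_prefix[k xk]; exists k => y xy Sy.
by have := xk y xy Sy; rewrite -ball_normE.
Qed.

Lemma sum_le_except_last {R : realDomainType} (F : nat -> R) (N k : nat) (a V : R) :
  0 <= a -> 0 <= V -> (forall t, (t < N)%N -> F t <= V) ->
  (forall t, (t + k < N)%N -> F t <= a) ->
  \sum_(t < N) F t <= N%:R * a + k%:R * V.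
Proof.
move=> a0 V0 FV Fa; case: (leqP k N) => kN.
  rewrite -(big_mkord xpredT) (big_cat_nat _ (leq_subr k N)) //=.
  apply: lerD.
    apply: le_trans (_ : \sum_(0 <= t < N - k) a <= _).
      rewrite big_nat_cond [leRHS]big_nat_cond.
      by apply: ler_sum => t /andP[/andP[_ tk] _]; apply: Fa; lia.
    rewrite sumr_const_nat subn0 -[a *+ _]mulr_natl.
    by apply: ler_wpM2r; rewrite ?ler_nat ?leq_subr.
  apply: le_trans (_ : \sum_(N - k <= t < N) V <= _).
    rewrite big_nat_cond [leRHS]big_nat_cond.
    by apply: ler_sum => t /andP[/andP[_ tN] _]; exact: FV.
  by rewrite sumr_const_nat -[V *+ _]mulr_natl; apply: ler_wpM2r; rewrite ?ler_nat //; lia.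
apply: le_trans (_ : \sum_(t < N) V <= _); first by apply: ler_sum => t _; exact: FV.
rewrite sumr_const card_ord -[V *+ _]mulr_natl -[leLHS]add0r.
by apply: lerD; [exact: mulr_ge0 | apply: ler_wpM2r => //; rewrite ler_nat ltnW].
Qed.

Section UniformConvergence.
Variables (R : realType) (I : set nat) (A : nat -> nat -> bool).
Variables (phi : Seq -> R) (D : nat -> R).
Hypothesis phiD : medium_variation_bound I A phi D.

Lemma phi_sub_avg_le_local (x y : Seq) (k N : nat) (e : R) : (0 < N)%N -> 0 <= e ->
  (forall z, same_prefix x k z -> Sigma I A z -> `|phi x - phi z| <= e) ->
  same_prefix x k y -> Sigma I A y ->
  `|phi y - phi_avg I A phi N y| <= 2 * e + k%:R * var_bound D 1 / N%:R.
Proof.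
move=> N0 e0 phi_e xy Sy; have N0R : 0 < N%:R :> R by rewrite ltr0n.
rewrite phi_sub_avg // normrM normfV normr_nat ler_pdivrMl //.
apply: le_trans (ler_norm_sum _ _ _) _.
apply: le_trans (sum_le_except_last (F := fun t => `|phi y - phi (prolong I A (N - t) y)|)
  (k := k) (a := 2 * e) _ (var_bound_ge0 D 1) _ _) _.
- by rewrite mulr_ge0.
- by move=> t tN; apply: (phi_prolong_var phiD) => //; lia.
- move=> t tkN; have Ntk : (k < N - t)%N by lia.
  have xp : same_prefix x k (prolong I A (N - t) y).
    by move=> i ik; rewrite prolongE ?xy //; lia.
  have Sp : Sigma I A (prolong I A (N - t) y) by apply: Sigma_prolong => //; lia.
  have := phi_e _ xy Sy; have := phi_e _ xp Sp.
  have tri := ler_distD (phi x) (phi y) (phi (prolong I A (N - t) y)).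
  rewrite [`|phi y - phi x|]distrC in tri => /=; lra.
- by rewrite mulrDr [in X in _ <= _ + X]mulrCA divff ?mulr1 // pnatr_eq0 -lt0n.
Qed.

Lemma phi_avg_cvg_uniform (K : set Seq) :
  {within Sigma I A, continuous phi} -> K `<=` Sigma I A -> compact K ->
  {uniform K, (fun j => phi_avg I A phi j.+1) @ \oo --> phi}.
Proof.
move=> phi_cont KS cK P /uniform_nbhs[E [entE EP]].
move: entE; rewrite -entourage_ballE => -[e /= e0 eE].
suff : \forall j \near \oo, forall y, K y -> `|phi y - phi_avg I A phi j.+1 y| < e.
  by apply: filterS => j ej; apply: EP => y Ky; apply: eE; rewrite /= -ball_normE; exact: ej.
have local x : K x -> \forall y \near x & j \near \oo,
    (Sigma I A y -> `|phi y - phi_avg I A phi j.+1 y| < e).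
  move=> Kx; have e4 : 0 < e / 4 by rewrite divr_gt0.
  have [k xk] := continuous_same_prefix phi_cont (KS x Kx) e4.
  pose M := Num.truncn (2 * k%:R * var_bound D 1 / e).
  exists (same_prefix x k, [set j | (M < j)%N]).
    by split; [exact: same_prefix_nbhs | exists M.+1].
  move=> [y j] /= [xy Mj] Sy.
  have MN : 2 * k%:R * var_bound D 1 / e < j.+1%:R.
    rewrite -truncn_lt_nat; first lia.
    by rewrite divr_ge0 ?mulr_ge0 ?var_bound_ge0 // ltW.
  apply: le_lt_trans (phi_sub_avg_le_local _ (ltW e4) _ xy Sy) _ => // [z xz Sz|].
    exact/ltW/xk.
  rewrite ltr_pdivrMr ?ltr0n // in MN.
  rewrite -ltrBrDl ltr_pdivrMr ?ltr0n //; lra.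
have := (compact_near_coveringP K).1 cK nat \oo _ eventually_filter local.
by apply: filterS => j ej y Ky; exact: ej y Ky (KS y Ky).
Qed.

End UniformConvergence.

Theorem lemma3p3 (R : realType) (I : set nat) (A : nat -> nat -> bool)
  (G : countType) (mul : G -> G -> G) (one : G) (inv : G -> G)
  (psi : nat -> G) (phi : Seq -> R) (alpha : R) :
  is_group mul one inv ->
  1 <= alpha ->
  medium_variation I A phi ->
  asym_symmetric I A mul one inv psi phi alpha ->
  exists (phis : nat -> Seq -> R) (D : nat -> R),
    (forall j, holder I A (phis j)) /\
    (forall j, 1 <= D j) /\
    (forall j, asym_symmetric I A mul one inv psi (phis j)
                 (alpha * D j `^ ((2 * j.+1)%:R^-1))) /\
    (fun j : nat => D j `^ ((2 * j.+1)%:R^-1)) @ \oo --> (1 : R) /\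
    (forall K : set Seq, K `<=` Sigma I A -> compact K ->
       {uniform K, phis @ \oo --> phi}).
Proof.
move=> _ _ [phi_cont [D [D_cvg phiD]]] sym.
exists (fun j => phi_avg I A phi j.+1), (fun j => expR (2 * var_bound D j.+1)).
split; [|split; [|split; [|split]]].
- by move=> j; apply: (holder_phi_avg phiD).
- by move=> j; rewrite -expR0 ler_expR mulr_ge0 ?var_bound_ge0.
- move=> j; rewrite powR_expR_var_bound //.
  apply: (asym_symmetric_perturb (b := 2 * j.+1%:R * var_bound D 1)) sym.
  + by rewrite divr_ge0 ?var_bound_ge0.
  + by rewrite !mulr_ge0 ?var_bound_ge0.
  + by move=> m x Sx; apply: (Birk_sub_avg_le phiD).
- under eq_cvg do rewrite powR_expR_var_bound //.
  by have := var_bound_cvg D_cvg; rewrite -(cvg_shiftS (fun n => expR _)).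
- by move=> K KS cK; apply: (phi_avg_cvg_uniform phiD).
Qed.
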